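(* Let $k=3$, let $\{e_1,e_2,e_3\}$ be an orthonormal basis of $\mathbb{C}^3$, $u=(e_1+e_2+e_3)/\sqrt3$, $v=(e_1+e_3)/\sqrt2$, and let \[H=0,\quad L_0=e_1u^*,\quad L_1=2vv^*+e_2e_2^*,\quad C_2=ue_1^*,\] with $I_b=\{0,1\}$, $I_p=\{2\}$. Let $\mathcal{L}(\rho)=\sum_{i\in\{0,1\}}\big(L_i\rho L_i^*-\tfrac12\{L_i^*L_i,\rho\}\big)+C_2\rho C_2^*-\tfrac12\{C_2^*C_2,\rho\}$. Then condition ($\mathcal{L}$-erg) holds and the unique $\rho_{\mathrm{inv}}\in\mathcal{D}_3$ with $\mathcal{L}(\rho_{\mathrm{inv}})=0$ is positive definite.
   Context: $\mathcal{D}_3=\{\rho\in M_3(\mathbb{C}):\rho\ge0,\operatorname{tr}\rho=1\}$. Condition ($\mathcal{L}$-erg): there exists a unique nonzero minimal orthogonal projection $\pi$ such that $\mathcal{L}(\pi M_3(\mathbb{C})\pi)\subset\pi M_3(\mathbb{C})\pi$; it implies $\mathcal{L}$ has a unique zero in $\mathcal{D}_3$. *)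

(* C^3 is modelled as column vectors over C := R[i],
   for an arbitrary real closed field R (R = the real numbers is a special case). *)
From HB Require Import structures.
From mathcomp Require Import all_boot all_order all_algebra.
From mathcomp Require Import complex.
Set Implicit Arguments. Unset Strict Implicit. Unset Printing Implicit Defensive.
Import Order.TTheory GRing.Theory Num.Theory.
Local Open Scope ring_scope.

Section Defs.
Variable R : rcfType.
Local Notation C := (R[i]).

Definition adjmx (m n : nat) (A : 'M[C]_(m, n)) : 'M[C]_(n, m) :=
  (map_mx Num.conj A)^T.

(* positive semidefinite: x^* A x >= 0 for all x (over C this forces A = A^* ) *)
Definition psdmx (n : nat) (A : 'M[C]_n) : Prop :=
  forall x : 'cV[C]_n, 0 <= (adjmx x *m A *m x) 0 0.

Definition pdmx (n : nat) (A : 'M[C]_n) : Prop :=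
  forall x : 'cV[C]_n, x != 0 -> 0 < (adjmx x *m A *m x) 0 0.

Definition density (n : nat) (rho : 'M[C]_n) : Prop :=
  psdmx rho /\ \tr rho = 1.

Definition orth_proj (n : nat) (P : 'M[C]_n) : Prop :=
  P *m P = P /\ adjmx P = P.

Definition L_invariant (n : nat) (L : 'M[C]_n -> 'M[C]_n) (P : 'M[C]_n) : Prop :=
  forall X : 'M[C]_n, exists Y : 'M[C]_n, L (P *m X *m P) = P *m Y *m P.

Definition nonzero_invariant_proj (n : nat) (L : 'M[C]_n -> 'M[C]_n) (P : 'M[C]_n) :=
  orth_proj P /\ P != 0 /\ L_invariant L P.

(* minimal among nonzero invariant orthogonal projections, for the usual order
   of projections (Q <= P iff Q P = Q, i.e. range Q included in range P) *)
Definition minimal_invariant_proj (n : nat) (L : 'M[C]_n -> 'M[C]_n) (P : 'M[C]_n) :=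
  nonzero_invariant_proj L P /\
  forall Q : 'M[C]_n, nonzero_invariant_proj L Q -> Q *m P = Q -> Q = P.

Definition L_erg (n : nat) (L : 'M[C]_n -> 'M[C]_n) : Prop :=
  exists P : 'M[C]_n, minimal_invariant_proj L P /\
    forall Q : 'M[C]_n, minimal_invariant_proj L Q -> Q = P.

Definition dissip (n : nat) (A rho : 'M[C]_n) : 'M[C]_n :=
  A *m rho *m adjmx A
  - 2^-1 *: (adjmx A *m A *m rho + rho *m (adjmx A *m A)).

(* the orthonormal basis e_1, e_2, e_3 (indices 0,1,2) *)
Definition e3 (i : 'I_3) : 'cV[C]_3 := delta_mx i 0.

Definition u3 : 'cV[C]_3 := (2.-root (3 : C))^-1 *: (e3 0 + e3 1 + e3 2).
Definition v3 : 'cV[C]_3 := (2.-root (2 : C))^-1 *: (e3 0 + e3 2).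

Definition H0 : 'M[C]_3 := 0.
Definition L0 : 'M[C]_3 := e3 0 *m adjmx u3.
Definition L1 : 'M[C]_3 := 2 *: (v3 *m adjmx v3) + e3 1 *m adjmx (e3 1).
Definition C2 : 'M[C]_3 := u3 *m adjmx (e3 0).

Definition Lgen (rho : 'M[C]_3) : 'M[C]_3 :=
  - 'i *: (H0 *m rho - rho *m H0) + (dissip L0 rho + dissip L1 rho) + dissip C2 rho.

End Defs.

From Pilot Require Import Defs.
From HB Require Import structures.
From mathcomp Require Import all_boot all_order all_algebra.
From mathcomp Require Import complex ring.
Set Implicit Arguments. Unset Strict Implicit. Unset Printing Implicit Defensive.
Import Order.TTheory GRing.Theory Num.Theory.
Local Open Scope ring_scope.

(* If P is an invariant orthogonal projection and Q = 1 - P, then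
   Q L(P) Q = sum_i (Q L_i P) (Q L_i P)^* vanishes, so every jump operator maps
   the range of P into itself.  Up to nonzero factors the jump operators are
   A0 = e1 1^T, A1 = (e1 + e3)(e1 + e3)^T + e2 e2^T and A2 = 1 e1^T, whose only
   common invariant subspaces are 0 and C^3: hence 1 is the only nonzero
   invariant projection.  Since C2 = L0^* and L1 is self-adjoint, L(1) = 0, and an
   explicit left inverse of L on traceless matrices shows that ker L is spanned
   by 1, so 1/3 is the unique invariant state. *)

Section Adjoint.
Variable R : rcfType.
Local Notation C := R[i].

Lemma adjmxM m n p (A : 'M[C]_(m, n)) (B : 'M[C]_(n, p)) :
  adjmx (A *m B) = adjmx B *m adjmx A.
Proof. by rewrite /adjmx map_mxM trmx_mul. Qed.

Lemma adjmxD m n (A B : 'M[C]_(m, n)) : adjmx (A + B) = adjmx A + adjmx B.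
Proof. by rewrite /adjmx map_mxD linearD. Qed.

Lemma adjmxB m n (A B : 'M[C]_(m, n)) : adjmx (A - B) = adjmx A - adjmx B.
Proof. by rewrite /adjmx map_mxB linearB. Qed.

Lemma adjmxZ m n (c : C) (A : 'M[C]_(m, n)) : adjmx (c *: A) = c^* *: adjmx A.
Proof. by apply/matrixP => i j; rewrite !mxE rmorphM. Qed.

Lemma adjmxK m n (A : 'M[C]_(m, n)) : adjmx (adjmx A) = A.
Proof. by apply/matrixP => i j; rewrite !mxE conjCK. Qed.

Lemma adjmx1 n : adjmx (1%:M : 'M[C]_n) = 1%:M.
Proof. by rewrite /adjmx map_mx1 trmx1. Qed.

Lemma adjmx_delta m n (i : 'I_m) (j : 'I_n) :
  adjmx (delta_mx i j : 'M[C]_(m, n)) = delta_mx j i.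
Proof. by apply/matrixP => k l; rewrite !mxE rmorph_nat andbC. Qed.

Lemma mxtrace_mul_adjmx m n (M : 'M[C]_(m, n)) :
  \tr (M *m adjmx M) = \sum_i \sum_j M i j * (M i j)^*.
Proof.
by apply: eq_bigr => i _; rewrite mxE; apply: eq_bigr => j _; rewrite !mxE.
Qed.

Lemma mxtrace_mul_adjmx_ge0 m n (M : 'M[C]_(m, n)) : 0 <= \tr (M *m adjmx M).
Proof.
by rewrite mxtrace_mul_adjmx; apply: sumr_ge0 => i _; apply: sumr_ge0 => j _;
  apply: mul_conjC_ge0.
Qed.

Lemma mxtrace_mul_adjmx_eq0 m n (M : 'M[C]_(m, n)) :
  (\tr (M *m adjmx M) == 0) = (M == 0).
Proof.
apply/idP/eqP => [|->]; last by rewrite mul0mx mxtrace0.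
rewrite mxtrace_mul_adjmx psumr_eq0 => [/allP M0|i _]; last first.
  by apply: sumr_ge0 => j _; apply: mul_conjC_ge0.
apply/matrixP => i j; rewrite mxE; move/implyP: (M0 i (mem_index_enum i)).
rewrite psumr_eq0 => [/(_ isT)/allP/(_ j (mem_index_enum j))|]; last first.
  by move=> k _; apply: mul_conjC_ge0.
by rewrite mul_conjC_eq0 => /eqP.
Qed.

Lemma sum_mul_adjmx_eq0 m n (I : eqType) (r : seq I) (N : I -> 'M[C]_(m, n)) :
  \sum_(i <- r) N i *m adjmx (N i) = 0 -> {in r, forall i, N i = 0}.
Proof.
move=> /(congr1 mxtrace); rewrite mxtrace0 raddf_sum => /eqP.
rewrite psumr_eq0 => [/allP N0 i /N0|i _]; last exact: mxtrace_mul_adjmx_ge0.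
by rewrite mxtrace_mul_adjmx_eq0 => /eqP.
Qed.

Lemma quad_scalar_mx n (x : 'cV[C]_n) (c : C) :
  (adjmx x *m c%:M *m x) 0 0 = c * \tr (x *m adjmx x).
Proof. by rewrite mul_mx_scalar -scalemxAl mxE -trace_mx11 mxtrace_mulC. Qed.

Lemma psdmx_scalar n (c : C) : 0 <= c -> psdmx (c%:M : 'M_n).
Proof. by move=> c_ge0 x; rewrite quad_scalar_mx mulr_ge0 ?mxtrace_mul_adjmx_ge0. Qed.

Lemma pdmx_scalar n (c : C) : 0 < c -> pdmx (c%:M : 'M_n).
Proof.
move=> c_gt0 x x_neq0; rewrite quad_scalar_mx mulr_gt0 // lt_def.
by rewrite mxtrace_mul_adjmx_eq0 x_neq0 mxtrace_mul_adjmx_ge0.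
Qed.

End Adjoint.

Section Dissipator.
Variables (R : rcfType) (n : nat).
Local Notation C := R[i].
Implicit Types (A P rho : 'M[C]_n).

Lemma dissipZ (c : C) A rho :
  c^* = c -> dissip (c *: A) rho = (c * c) *: dissip A rho.
Proof.
move=> c_real; rewrite /dissip adjmxZ c_real -!scalemxAl -!scalemxAr -!scalemxAl.
by rewrite scalerBr -!scalerDr !scalerA; congr (_ - _ *: _); exact: mulrC.
Qed.

Lemma dissipZr (c : C) A rho : dissip A (c *: rho) = c *: dissip A rho.
Proof.
rewrite /dissip -!scalemxAl -!scalemxAr -!scalemxAl scalerBr -scalerDr.
by congr (_ - _); rewrite !scalerA mulrC.
Qed.

Lemma dissip1 A : dissip A 1%:M = A *m adjmx A - adjmx A *m A.
Proof.
rewrite /dissip mulmx1 mul1mx mulmx1; congr (_ - _).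
by apply/matrixP => i j; rewrite !mxE; field.
Qed.

Lemma dissip_compl_proj A P : orth_proj P ->
  (1%:M - P) *m dissip A P *m (1%:M - P) =
  ((1%:M - P) *m A *m P) *m adjmx ((1%:M - P) *m A *m P).
Proof.
move=> [PP P_sa]; set Q := 1%:M - P.
have QP : Q *m P = 0 by rewrite mulmxBl mul1mx PP subrr.
have PQ : P *m Q = 0 by rewrite mulmxBr mulmx1 PP subrr.
have Q_sa : adjmx Q = Q by rewrite adjmxB adjmx1 P_sa.
have QWQ B : Q *m (B *m P + P *m B) *m Q = 0.
  by rewrite mulmxDr mulmxDl !mulmxA QP !mul0mx addr0 -[_ *m P *m Q]mulmxA PQ mulmx0.
clearbody Q; rewrite !adjmxM Q_sa P_sa /dissip mulmxBr mulmxBl -scalemxAr -scalemxAl QWQ.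
by rewrite scaler0 subr0 !mulmxA -[_ *m P *m P]mulmxA PP.
Qed.

Lemma invariant_proj_compl (L : 'M[C]_n -> 'M[C]_n) (r : seq 'M[C]_n) P :
  (forall rho, L rho = \sum_(A <- r) dissip A rho) -> orth_proj P -> L_invariant L P ->
  {in r, forall A, (1%:M - P) *m A *m P = 0}.
Proof.
move=> L_sum Pproj /(_ 1%:M) [Y]; rewrite mulmx1 (proj1 Pproj) L_sum => LP.
apply: sum_mul_adjmx_eq0; under eq_bigr do rewrite -dissip_compl_proj //.
have QP : (1%:M - P) *m P = 0 by rewrite mulmxBl mul1mx (proj1 Pproj) subrr.
by rewrite -mulmx_suml -mulmx_sumr LP !mulmxA QP !mul0mx.
Qed.

Lemma L_erg_of_unique_proj (L : 'M[C]_n -> 'M[C]_n) P :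
  nonzero_invariant_proj L P ->
  (forall Q, nonzero_invariant_proj L Q -> Q = P) -> L_erg L.
Proof.
move=> P_inv P_unique; exists P; split; first by split=> // Q /P_unique.
by move=> Q [/P_unique].
Qed.

End Dissipator.

Ltac case_ord3 i := let k := fresh in let lt_k3 := fresh in
  case: i => [[|[|[|k]]] lt_k3] //.

Lemma mx_eq1_of_fixed_delta (K : pzRingType) n (P : 'M[K]_n) :
  (forall j, P *m delta_mx j 0 = delta_mx j 0 :> 'cV_n) -> P = 1%:M.
Proof.
by move=> fixP; apply/matrixP => i j; have /matrixP/(_ i 0) := fixP j;
  rewrite -colE !mxE andbT.
Qed.

Section Mx3.
Variable K : pzRingType.

Definition mx3 (a b c d e f g h k : K) : 'M[K]_3 :=
  \matrix_(i, j) nth 0 (nth [::] [:: [:: a; b; c]; [:: d; e; f]; [:: g; h; k]] i) j.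

Lemma mx3_eta (A : 'M[K]_3) :
  A = mx3 (A 0 0) (A 0 1) (A 0 2) (A 1 0) (A 1 1) (A 1 2) (A 2 0) (A 2 1) (A 2 2).
Proof.
by apply/matrixP => i j; rewrite mxE; case_ord3 i; case_ord3 j;
  congr (A _ _); apply: val_inj.
Qed.

Lemma mulmx3 a b c d e f g h k a' b' c' d' e' f' g' h' k' :
  mx3 a b c d e f g h k *m mx3 a' b' c' d' e' f' g' h' k' =
  mx3 (a * a' + b * d' + c * g') (a * b' + b * e' + c * h') (a * c' + b * f' + c * k')
      (d * a' + e * d' + f * g') (d * b' + e * e' + f * h') (d * c' + e * f' + f * k')
      (g * a' + h * d' + k * g') (g * b' + h * e' + k * h') (g * c' + h * f' + k * k').
Proof.
by apply/matrixP => i j; case_ord3 i; case_ord3 j;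
  rewrite !mxE !big_ord_recl big_ord0 !mxE /= addr0 addrA.
Qed.

Lemma addmx3 a b c d e f g h k a' b' c' d' e' f' g' h' k' :
  mx3 a b c d e f g h k + mx3 a' b' c' d' e' f' g' h' k' =
  mx3 (a + a') (b + b') (c + c') (d + d') (e + e') (f + f') (g + g') (h + h') (k + k').
Proof. by apply/matrixP => i j; case_ord3 i; case_ord3 j; rewrite !mxE. Qed.

Lemma submx3 a b c d e f g h k a' b' c' d' e' f' g' h' k' :
  mx3 a b c d e f g h k - mx3 a' b' c' d' e' f' g' h' k' =
  mx3 (a - a') (b - b') (c - c') (d - d') (e - e') (f - f') (g - g') (h - h') (k - k').
Proof. by apply/matrixP => i j; case_ord3 i; case_ord3 j; rewrite !mxE. Qed.

Lemma scalemx3 x a b c d e f g h k :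
  x *: mx3 a b c d e f g h k =
  mx3 (x * a) (x * b) (x * c) (x * d) (x * e) (x * f) (x * g) (x * h) (x * k).
Proof. by apply/matrixP => i j; case_ord3 i; case_ord3 j; rewrite !mxE. Qed.

Lemma mxtrace3 a b c d e f g h k : \tr (mx3 a b c d e f g h k) = a + e + k.
Proof. by rewrite /mxtrace !big_ord_recl big_ord0 !mxE /= addr0 addrA. Qed.

Lemma mx3_1 : 1%:M = mx3 1 0 0 0 1 0 0 0 1.
Proof. by apply/matrixP => i j; case_ord3 i; case_ord3 j; rewrite !mxE. Qed.

Lemma mx3_0 : 0 = mx3 0 0 0 0 0 0 0 0 0.
Proof. by apply/matrixP => i j; case_ord3 i; case_ord3 j; rewrite !mxE. Qed.

End Mx3.

Lemma adjmx3 (R : rcfType) (a b c d e f g h k : R[i]) :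
  adjmx (mx3 a b c d e f g h k) = mx3 a^* d^* g^* b^* e^* h^* c^* f^* k^*.
Proof. by apply/matrixP => i j; case_ord3 i; case_ord3 j; rewrite !mxE. Qed.

Section Example.
Variable R : rcfType.
Local Notation C := R[i].
Implicit Types (rho P : 'M[C]_3) (y : 'cV[C]_3).
Local Notation e3 := (Defs.e3 R).
Local Notation L0 := (Defs.L0 R).
Local Notation L1 := (Defs.L1 R).
Local Notation C2 := (Defs.C2 R).
Local Notation Lgen := (@Defs.Lgen R).

Definition one3 : 'cV[C]_3 := e3 0 + e3 1 + e3 2.
Definition w3 : 'cV[C]_3 := e3 0 + e3 2.

Definition A0 : 'M[C]_3 := e3 0 *m adjmx one3.
Definition A1 : 'M[C]_3 := w3 *m adjmx w3 + e3 1 *m adjmx (e3 1).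
Definition A2 : 'M[C]_3 := one3 *m adjmx (e3 0).

Lemma inv_sqrt_nat (k : nat) : (0 < k)%N ->
  let x : C := (2.-root (k%:R : C))^-1 in [/\ x^* = x, x * x = k%:R^-1 & x != 0].
Proof.
move=> k_gt0 x; have s_ge0 : 0 <= 2.-root (k%:R : C) by rewrite rootC_ge0 ?ler0n.
split; first by rewrite /x fmorphV /= (geC0_conj s_ge0).
  by rewrite /x -invfM -expr2 rootCK.
by rewrite /x invr_eq0 rootC_eq0 // pnatr_eq0 -lt0n.
Qed.

Lemma L0E : L0 = (2.-root (3 : C))^-1 *: A0.
Proof.
have [x_real _ _] := inv_sqrt_nat (k := 3) isT.
by rewrite /L0 /u3 adjmxZ x_real -scalemxAr.
Qed.

Lemma C2E : C2 = (2.-root (3 : C))^-1 *: A2.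
Proof. by rewrite /C2 /u3 -scalemxAl. Qed.

Lemma L1E : L1 = A1.
Proof.
have [y_real y_sq _] := inv_sqrt_nat (k := 2) isT.
rewrite /L1 /v3 adjmxZ y_real -scalemxAl -scalemxAr !scalerA -mulrA y_sq.
by rewrite mulfV ?pnatr_eq0 // scale1r.
Qed.

Lemma C2_adj : C2 = adjmx L0.
Proof. by rewrite /C2 /L0 adjmxM adjmxK. Qed.

Lemma L1_adj : adjmx L1 = L1.
Proof. by rewrite L1E /A1 adjmxD !adjmxM !adjmxK. Qed.

Lemma Lgen_sum rho : Lgen rho = \sum_(A <- [:: L0; L1; C2]) dissip A rho.
Proof.
rewrite /Lgen /H0 mul0mx mulmx0 subr0 scaler0 add0r.
by rewrite 2!big_cons big_seq1 [RHS]addrA.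
Qed.

Lemma Lgen_rescaled rho :
  Lgen rho = 3^-1 *: dissip A0 rho + dissip A1 rho + 3^-1 *: dissip A2 rho.
Proof.
have [x_real x_sq _] := inv_sqrt_nat (k := 3) isT.
by rewrite Lgen_sum 2!big_cons big_seq1 L0E L1E C2E !dissipZ // x_sq [LHS]addrA.
Qed.

Lemma LgenZ (c : C) rho : Lgen (c *: rho) = c *: Lgen rho.
Proof.
by rewrite !Lgen_sum scaler_sumr; apply: eq_bigr => A _; rewrite dissipZr.
Qed.

Lemma Lgen1 : Lgen (1%:M : 'M[C]_3) = 0.
Proof.
rewrite Lgen_sum 2!big_cons big_seq1 !dissip1 L1_adj C2_adj adjmxK.
by rewrite subrr add0r addrA subrK subrr.
Qed.

Lemma e3_mul y i : adjmx (e3 i) *m y = (y i 0)%:M.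
Proof.
by rewrite /e3 adjmx_delta -rowE; apply/matrixP => a b; rewrite !ord1 !mxE.
Qed.

Lemma one3_mul y : adjmx one3 *m y = (y 0 0 + y 1 0 + y 2 0)%:M.
Proof. by rewrite /one3 !adjmxD !mulmxDl !e3_mul -!raddfD. Qed.

Lemma w3_mul y : adjmx w3 *m y = (y 0 0 + y 2 0)%:M.
Proof. by rewrite /w3 adjmxD mulmxDl !e3_mul -raddfD. Qed.

Lemma A0_mul y : A0 *m y = (y 0 0 + y 1 0 + y 2 0) *: e3 0.
Proof. by rewrite /A0 -mulmxA one3_mul mul_mx_scalar. Qed.

Lemma A1_mul y : A1 *m y = (y 0 0 + y 2 0) *: w3 + y 1 0 *: e3 1.
Proof. by rewrite /A1 mulmxDl -!mulmxA w3_mul e3_mul !mul_mx_scalar. Qed.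

Lemma A2_mul y : A2 *m y = y 0 0 *: one3.
Proof. by rewrite /A2 -mulmxA e3_mul mul_mx_scalar. Qed.

Ltac vec3_eq :=
  apply/matrixP => - [[|[|[|?]]] ?] j; rewrite ord1 //= !mxE /=; field.

Section FixedVectors.
Variable P : 'M[C]_3.
Hypotheses (A0P : A0 *m P = P *m A0 *m P) (A1P : A1 *m P = P *m A1 *m P)
  (A2P : A2 *m P = P *m A2 *m P).
Let fixed y := P *m y = y.

Lemma fixed_mul A y : A *m P = P *m A *m P -> fixed y -> fixed (A *m y).
Proof. by move=> AP fy; rewrite /fixed -[in LHS]fy !mulmxA -AP -mulmxA fy. Qed.

Lemma fixedZ c y : fixed y -> fixed (c *: y).
Proof. by rewrite /fixed -scalemxAr => ->. Qed.

Lemma fixedB y z : fixed y -> fixed z -> fixed (y - z).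
Proof. by rewrite /fixed mulmxBr => -> ->. Qed.

Lemma fixed_one3 : fixed one3 -> P = 1%:M.
Proof.
move=> f_one.
have f0 : fixed (e3 0).
  have -> : e3 0 = 3^-1 *: (A0 *m one3) by rewrite A0_mul; vec3_eq.
  exact/fixedZ/fixed_mul.
have fw : fixed w3.
  have -> : w3 = A1 *m one3 - one3 by rewrite A1_mul; vec3_eq.
  exact/fixedB/f_one/fixed_mul.
have f2 : fixed (e3 2) by rewrite (_ : e3 2 = w3 - e3 0); [exact: fixedB | vec3_eq].
have f1 : fixed (e3 1) by rewrite (_ : e3 1 = one3 - w3); [exact: fixedB | vec3_eq].
by apply: mx_eq1_of_fixed_delta => j; case_ord3 j.
Qed.

Lemma fixed_nonzero y : fixed y -> y != 0 -> P = 1%:M.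
Proof.
move=> fy y_neq0; apply: fixed_one3.
have [y0|y0] := eqVneq (y 0 0) 0; last first.
  rewrite (_ : one3 = (y 0 0)^-1 *: (A2 *m y)); first exact/fixedZ/fixed_mul.
  by rewrite A2_mul scalerA mulVf ?scale1r.
have [y2|y2] := eqVneq (y 2 0) 0; last first.
  rewrite (_ : one3 = (y 2 0)^-1 *: (A2 *m (A1 *m y))).
    exact/fixedZ/fixed_mul/fixed_mul.
  rewrite A2_mul A1_mul !mxE /= y0.
  by rewrite [X in _ *: (X *: _)](_ : _ = y 2 0) ?scalerK //; ring.
have y1 : y 1 0 != 0.
  apply: contra y_neq0 => /eqP y1; apply/eqP/matrixP => i j.
  rewrite ord1 mxE; case_ord3 i; [rewrite -y0 | rewrite -y1 | rewrite -y2];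
    by congr (y _ _); apply: val_inj.
rewrite (_ : one3 = A2 *m ((y 1 0)^-1 *: (A0 *m y))).
  exact/fixed_mul/fixedZ/fixed_mul.
by rewrite A0_mul y0 y2 add0r addr0 scalerA mulVf // scale1r A2_mul !mxE /= scale1r.
Qed.

Lemma idempotent_eq1 : P *m P = P -> P != 0 -> P = 1%:M.
Proof.
move=> PP /eqP P_neq0.
have [j Pj_neq0] : exists j, col j P != 0.
  apply/existsP; apply: contra_notT P_neq0 => /existsPn col0.
  apply/matrixP => i j; have /negPn/eqP/matrixP/(_ i 0) := col0 j.
  by rewrite !mxE.
by apply: fixed_nonzero Pj_neq0; rewrite /fixed colE mulmxA PP.
Qed.

End FixedVectors.

Lemma invariant_proj_Lgen_eq1 P : nonzero_invariant_proj Lgen P -> P = 1%:M.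
Proof.
move=> [Pproj [P_neq0 P_inv]].
have compl := invariant_proj_compl Lgen_sum Pproj P_inv.
have stable (c : C) A : c != 0 -> (1%:M - P) *m (c *: A) *m P = 0 ->
    A *m P = P *m A *m P.
  move=> c_neq0; rewrite -scalemxAr -scalemxAl => /eqP.
  by rewrite scaler_eq0 (negbTE c_neq0) !mulmxBl mul1mx subr_eq0 => /eqP.
have [_ _ x_neq0] := inv_sqrt_nat (k := 3) isT.
apply: (idempotent_eq1 _ _ _ (proj1 Pproj) P_neq0).
- by apply: (stable _ _ x_neq0); rewrite -L0E compl ?mem_head.
- by apply: (stable _ _ (oner_neq0 C)); rewrite scale1r -L1E compl // !inE eqxx orbT.
- by apply: (stable _ _ x_neq0); rewrite -C2E compl // !inE eqxx !orbT.
Qed.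

Lemma A0_mx3 : A0 = mx3 1 1 1 0 0 0 0 0 0.
Proof.
by apply/matrixP => i j; case_ord3 i; case_ord3 j;
  rewrite !mxE big_ord1 !mxE /= ?(addr0, add0r, conjC1, mul1r, mul0r).
Qed.

Lemma A1_mx3 : A1 = mx3 1 0 1 0 1 0 1 0 1.
Proof.
by apply/matrixP => i j; case_ord3 i; case_ord3 j;
  rewrite !mxE !big_ord1 !mxE /= ?(addr0, add0r, conjC1, conjC0, mul1r, mul0r).
Qed.

Lemma A2_mx3 : A2 = mx3 1 0 0 1 0 0 1 0 0.
Proof.
have -> : A2 = adjmx A0 by rewrite /A2 /A0 adjmxM adjmxK.
by rewrite A0_mx3 adjmx3 conjC1 conjC0.
Qed.

Lemma Lgen_mx3 a b c d e f g h k :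
  Lgen (mx3 a b c d e f g h k) = 6^-1 *: mx3
    (- 10 * a + b + c + d + 2 * e + 2 * f + g + 2 * h + 8 * k)
    (a - 8 * b - c - e - h)
    (a - b - 11 * c - f + 6 * g - k)
    (a - 8 * d - e - f - g)
    (2 * a - b - d - 2 * e - f - h)
    (2 * a - c - d - e - 5 * f - k)
    (a + 6 * c - d - 11 * g - h - k)
    (2 * a - b - e - g - 5 * h - k)
    (8 * a - c - f - g - h - 8 * k).
Proof.
rewrite Lgen_rescaled A0_mx3 A1_mx3 A2_mx3 /dissip !adjmx3 ?conjC0 ?conjC1.
rewrite !(mulmx3, addmx3, submx3, scalemx3).
by congr mx3; field.
Qed.

(* A left inverse of [Lgen] on traceless matrices, obtained by solving the linear
   system of [Lgen_mx3]; the entry [X 2 2] is not needed since [\tr (Lgen rho) = 0]. *)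
Definition Lgen_pinv (X : 'M[C]_3) : 'M[C]_3 := mx3
  ((- 51 * X 0 0 - 23 * X 0 1 + 5 * X 0 2 - 23 * X 1 0 + 181 * X 1 1
    - 53 * X 1 2 + 5 * X 2 0 - 53 * X 2 1) / 156)
  ((9 * X 0 0 - 389 * X 0 1 + 58 * X 0 2 - 25 * X 1 0 + 225 * X 1 1
    - 48 * X 1 2 + 32 * X 2 0 + 30 * X 2 1) / 468)
  ((- 126 * X 0 0 + 116 * X 0 1 - 799 * X 0 2 + 64 * X 1 0 - 342 * X 1 1
    + 165 * X 1 2 - 461 * X 2 0 + 87 * X 2 1) / 936)
  ((9 * X 0 0 - 25 * X 0 1 + 32 * X 0 2 - 389 * X 1 0 + 225 * X 1 1
    + 30 * X 1 2 + 58 * X 2 0 - 48 * X 2 1) / 468)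
  ((- 27 * X 0 0 + 49 * X 0 1 - 31 * X 0 2 + 49 * X 1 0 - 467 * X 1 1
    + 79 * X 1 2 - 31 * X 2 0 + 79 * X 2 1) / 156)
  ((- 54 * X 0 0 - 32 * X 0 1 + 55 * X 0 2 + 20 * X 1 0 + 210 * X 1 1
    - 453 * X 1 2 + 29 * X 2 0 - 63 * X 2 1) / 312)
  ((- 126 * X 0 0 + 64 * X 0 1 - 461 * X 0 2 + 116 * X 1 0 - 342 * X 1 1
    + 87 * X 1 2 - 799 * X 2 0 + 165 * X 2 1) / 936)
  ((- 54 * X 0 0 + 20 * X 0 1 + 29 * X 0 2 - 32 * X 1 0 + 210 * X 1 1
    - 63 * X 1 2 + 55 * X 2 0 - 453 * X 2 1) / 312)
  ((3 * X 0 0 - X 0 1 + X 0 2 - X 1 0 + 11 * X 1 1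
    - X 1 2 + X 2 0 - X 2 1) / 6).

Lemma Lgen_pinvK rho : Lgen_pinv (Lgen rho) = rho - (\tr rho / 3)%:M.
Proof.
rewrite [rho]mx3_eta Lgen_mx3 scalemx3 /Lgen_pinv !mxE /= mxtrace3.
by rewrite -scalemx1 mx3_1 scalemx3 submx3; congr mx3; field.
Qed.

Lemma Lgen_kernel rho : Lgen rho = 0 -> rho = (\tr rho / 3)%:M.
Proof.
move=> L_rho; apply/eqP; rewrite -subr_eq0 -Lgen_pinvK L_rho mx3_0 /Lgen_pinv !mxE /=.
by apply/eqP; congr mx3; field.
Qed.
End Example.

Theorem proposition5p1 (R : rcfType) :
  L_erg (@Lgen R) /\
  exists rho_inv : 'M[R[i]]_3,
    [/\ density rho_inv, Lgen rho_inv = 0,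
        (forall rho : 'M[R[i]]_3, density rho -> Lgen rho = 0 -> rho = rho_inv)
      & pdmx rho_inv].
Proof.
have third_gt0 : 0 < (3 : R[i])^-1 by rewrite invr_gt0 ltr0n.
split.
  apply: (@L_erg_of_unique_proj _ _ _ 1%:M); last exact: invariant_proj_Lgen_eq1.
  split; first by rewrite /orth_proj mulmx1 adjmx1.
  split; first exact: (oner_neq0 'M[R[i]]_3).
  by move=> X; exists (Lgen X); rewrite !mul1mx !mulmx1.
exists (3^-1)%:M; split.
- split; first exact/psdmx_scalar/ltW.
  by rewrite mxtrace_scalar -[_ *+ 3]mulr_natr mulVf ?pnatr_eq0.
- by rewrite -scalemx1 LgenZ Lgen1 scaler0.
- by move=> rho [_ tr1] /Lgen_kernel ->; rewrite tr1 mul1r.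
- exact: pdmx_scalar.
Qed.
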